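(* Let $P$ be a program, $F$ a set of facts, and $E$ an embedding program for $P\cup F$. Then $AS(\mathrm{grnd}(P)\cup F)=AS(E)$.
   Context: A program is a finite set of rules of the form $\alpha_1 \mid \dots \mid \alpha_k \;\texttt{:-}\; \beta_1,\dots,\beta_n, \mathit{not}\ \beta_{n+1},\dots,\mathit{not}\ \beta_m$ ($k,n,m\ge 0$) over atoms $p(\mathbf{X})$, with $H(r)=\{\alpha_1,\dots,\alpha_k\}$, $B^+(r)=\{\beta_1,\dots,\beta_n\}$, $B^-(r)=\{\mathit{not}\ \beta_{n+1},\dots,\mathit{not}\ \beta_m\}$, $B(r)=B^+(r)\cup B^-(r)$. Programs are safe (every variable of a rule occurs in an atom of its positive body) and contain no facts; facts are given separately as a set $F$ of ground atoms, each fact $a$ being regarded as the ground rule with head $\{a\}$ and empty body. All constants come from a fixed finite Herbrand universe $U$. For a set of rules $R$, $\mathrm{Heads}(R)=\bigcup_{r\in R}H(r)$. $\mathrm{grnd}(P)$ is the set of all ground instances of rules of $P$. For a ground program $G$ and a set of ground atoms $A$, the FLP reduct is $G^A=\{r\in G : A\models B(r)\}$; $A$ is an answer set of $G$ if $A$ is a subset-minimal model of $G^A$. $AS(G)$ is the set of answer sets of $G$. Embeddings: for a set of ground rules $R\subseteq \mathrm{grnd}(P)\cup F$ and a rule $r\in \mathrm{grnd}(P)\cup F$: $R\vdash_b r$ iff for every $a\in B^+(r)$ there is $r'\in R$ with $a\in H(r')$; $R\vdash_h r$ iff $r\in R$; $R\vdash r$ iff either $R\nvdash_b r$ or $R\vdash_h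 r$. A set $E\subseteq \mathrm{grnd}(P)\cup F$ is an embedding program for $P\cup F$ if $E\vdash r$ for every $r\in \mathrm{grnd}(P)\cup F$. *)

From Stdlib Require Import List.
Import ListNotations.
Set Implicit Arguments.

Inductive term (U : Type) : Type :=
| TVar : nat -> term U
| TConst : U -> term U.
Arguments TVar {U} _.
Arguments TConst {U} _.

Record atom (T : Type) : Type := mkAtom { apred : nat ; aargs : list T }.

(* Rule  H :- B+, not B-.  with H, B+, B- given as lists of atoms. *)
Record rule (A : Type) : Type :=
  mkRule { rhead : list A ; rpos : list A ; rneg : list A }.

Definition natom (U : Type) := atom (term U).
Definition gatom (U : Type) := atom U.
Definition nrule (U : Type) := rule (natom U).
Definition grule (U : Type) := rule (gatom U).

Definition program (U : Type) := list (nrule U).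

Definition term_vars U (t : term U) : list nat :=
  match t with TVar v => [v] | TConst _ => [] end.
Definition atom_vars U (a : natom U) : list nat := flat_map (@term_vars U) (aargs a).
Definition occurs_in_rule U (x : nat) (r : nrule U) : Prop :=
  exists a, (In a (rhead r) \/ In a (rpos r) \/ In a (rneg r)) /\ In x (atom_vars a).

Definition safe_rule U (r : nrule U) : Prop :=
  forall x, occurs_in_rule x r -> exists a, In a (rpos r) /\ In x (atom_vars a).
Definition safe_program U (P : program U) : Prop := forall r, In r P -> safe_rule r.

Definition is_fact_rule A (r : rule A) : Prop :=
  (exists a, rhead r = [a]) /\ rpos r = [] /\ rneg r = [].
Definition no_facts U (P : program U) : Prop := forall r, In r P -> ~ is_fact_rule r.

Definition subst_term U (s : nat -> U) (t : term U) : U :=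
  match t with TVar v => s v | TConst c => c end.
Definition subst_atom U (s : nat -> U) (a : natom U) : gatom U :=
  mkAtom (apred a) (map (subst_term s) (aargs a)).
Definition subst_rule U (s : nat -> U) (r : nrule U) : grule U :=
  mkRule (map (subst_atom s) (rhead r)) (map (subst_atom s) (rpos r))
         (map (subst_atom s) (rneg r)).

Definition gprog (U : Type) := grule U -> Prop.
Definition interp (U : Type) := gatom U -> Prop.

Definition grnd U (P : program U) : gprog U :=
  fun g => exists r s, In r P /\ g = subst_rule s r.

Definition fact_rule U (a : gatom U) : grule U := mkRule [a] [] [].

Definition grnd_facts U (P : program U) (F : interp U) : gprog U :=
  fun g => grnd P g \/ exists a, F a /\ g = fact_rule a.

Definition body_true U (A : interp U) (r : grule U) : Prop :=
  (forall a, In a (rpos r) -> A a) /\ (forall a, In a (rneg r) -> ~ A a).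
Definition rule_sat U (A : interp U) (r : grule U) : Prop :=
  body_true A r -> exists a, In a (rhead r) /\ A a.
Definition is_model U (G : gprog U) (A : interp U) : Prop :=
  forall r, G r -> rule_sat A r.
Definition reduct U (G : gprog U) (A : interp U) : gprog U :=
  fun r => G r /\ body_true A r.
Definition subset_interp U (A B : interp U) : Prop := forall a, A a -> B a.
Definition is_minimal_model U (G : gprog U) (A : interp U) : Prop :=
  is_model G A /\
  forall B, subset_interp B A -> is_model G B -> subset_interp A B.
Definition answer_set U (G : gprog U) (A : interp U) : Prop :=
  is_minimal_model (reduct G A) A.

Definition heads_contain U (R : gprog U) (a : gatom U) : Prop :=
  exists r', R r' /\ In a (rhead r').
Definition derives_b U (R : gprog U) (r : grule U) : Prop :=
  forall a, In a (rpos r) -> heads_contain R a.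
Definition derives_h U (R : gprog U) (r : grule U) : Prop := R r.
Definition derives U (R : gprog U) (r : grule U) : Prop :=
  ~ derives_b R r \/ derives_h R r.

Definition embedding_program U (P : program U) (F : interp U) (E : gprog U) : Prop :=
  (forall r, E r -> grnd_facts P F r) /\
  (forall r, grnd_facts P F r -> derives E r).

(* Let X be a ground program and E a subprogram of X such that E ⊢ r for every
   rule r of X: either some positive body atom of r is not a head of E, or r
   already belongs to E.  The argument has two steps.
   1. Support: every atom of an answer set A of X is a head of some rule of E.
      Indeed, the atoms of A that are heads of E still form a model of the
      reduct X^A (a rule whose positive body lies in those atoms is
      E-derivable, hence in E, and one of its true heads is an E-head), so by
      minimality they exhaust A.  Since E itself satisfies the embedding
      condition, the same holds for answer sets of E.
   2. Reducts agree: for an interpretation supported by the heads of E, a rule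
      of X whose body is true has its positive body among E-heads, hence lies
      in E; so X^A and E^A coincide, and so do their minimal models.
   The main theorem instantiates X with grnd(P) ∪ F. *)
From Stdlib Require Import List.
Set Implicit Arguments.

Lemma minimal_model_ext U {G1 G2 : gprog U} {A : interp U} :
  (forall r, G1 r <-> G2 r) -> is_minimal_model G1 A -> is_minimal_model G2 A.
Proof.
  intros Heq [Hmodel Hmin]; split.
  - intros r Hr; apply Hmodel, Heq, Hr.
  - intros B HBA HBmodel; apply Hmin; [exact HBA |].
    intros r Hr; apply HBmodel, Heq, Hr.
Qed.

Definition embeds U (E X : gprog U) : Prop := forall r, X r -> derives E r.

Definition supported_by U (E : gprog U) (A : interp U) : Prop :=
  forall a, A a -> heads_contain E a.

Lemma embeds_refl U (E : gprog U) : embeds E E.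
Proof. intros r Hr; right; exact Hr. Qed.

Lemma answer_set_supported U (E X : gprog U) (A : interp U) :
  embeds E X -> answer_set X A -> supported_by E A.
Proof.
  intros HXE [Hmodel Hmin].
  set (B := fun a => A a /\ heads_contain E a).
  assert (HBmodel : is_model (reduct X A) B).
  { intros r [Hr HbodyA] [HposB _].
    assert (HrE : E r).
    { destruct (HXE r Hr) as [Hnotb | Hh]; [| exact Hh].
      exfalso; apply Hnotb; intros a Ha; apply (HposB a Ha). }
    destruct (Hmodel r (conj Hr HbodyA) HbodyA) as [a [Hhead HAa]].
    exists a; repeat split; [exact Hhead | exact HAa |].
    exists r; split; assumption. }
  intros a Ha; exact (proj2 (Hmin B (fun x Hx => proj1 Hx) HBmodel a Ha)).
Qed.

Section Embedding.
Variable U : Type.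
Variables E X : gprog U.
Hypothesis HXE : embeds E X.
Hypothesis HEX : forall r, E r -> X r.

Lemma reduct_agree (A : interp U) :
  supported_by E A -> forall r, reduct X A r <-> reduct E A r.
Proof.
  intros Hsupp r; split; intros [Hr Hbody]; split; auto.
  destruct (HXE Hr) as [Hnotb | Hh]; [| exact Hh].
  exfalso; apply Hnotb; intros a Ha; apply Hsupp, (proj1 Hbody a Ha).
Qed.

Lemma answer_sets_embedding (A : interp U) : answer_set X A <-> answer_set E A.
Proof.
  split; intro Hans.
  - apply (minimal_model_ext (reduct_agree (answer_set_supported HXE Hans))), Hans.
  - assert (Hsupp : supported_by E A)
      by exact (answer_set_supported (embeds_refl E) Hans).
    apply (minimal_model_ext (G1 := reduct E A)); [| exact Hans].
    intro r; symmetry; apply reduct_agree, Hsupp.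
Qed.

End Embedding.

Theorem mainTheorem2 (U : Type) (U_finite : exists l : list U, forall u : U, In u l)
  (P : program U) (HPsafe : safe_program P) (HPnofacts : no_facts P)
  (F : interp U) (E : gprog U) (HE : embedding_program P F E) :
  forall A : interp U, answer_set (grnd_facts P F) A <-> answer_set E A.
Proof.
  destruct HE as [HEsub HEembeds].
  intro A; exact (answer_sets_embedding HEembeds HEsub A).
Qed.
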